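(* Under the hypotheses and notation below, the two transformed potentials $$u^{[N]}_0=u+\mathrm{i}\left(\varphi^{(2)\dagger}\mathbf{M}^{-1}\varphi^{(1)}\right)_x$$ and $$u^{[N]}_\infty=\frac{1+2\varphi^{(1)\dagger}\mathbf{\Lambda}^\dagger\mathbf{M}^{-1}\varphi^{(1)}}{1-2\varphi^{(2)\dagger}\mathbf{\Lambda}^\dagger(\mathbf{M}^\dagger)^{-1}\varphi^{(2)}}\,u+\frac{4\varphi^{(2)\dagger}(\mathbf{\Lambda}^{\dagger})^2\mathbf{M}^{-1}\varphi^{(1)}}{1-2\varphi^{(2)\dagger}\mathbf{\Lambda}^\dagger(\mathbf{M}^\dagger)^{-1}\varphi^{(2)}}$$ coincide: $u^{[N]}_0=u^{[N]}_\infty$.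
   Context: Let $u\in L^{\infty}\cap C^{\infty}$ be a solution of the DNLS equation $\mathrm{i}u_t+u_{xx}+2\mathrm{i}(|u|^2u)_x=0$. $^*$ denotes complex conjugation, $^\dagger$ conjugate transpose, $\sigma_3=\mathrm{diag}(1,-1)$, $\mathbf{Q}=\begin{pmatrix}0&\mathrm{i}u\\ \mathrm{i}u^*&0\end{pmatrix}$, $\mathbf{U}(\mathbf{Q};\lambda)=-2\mathrm{i}\sigma_3\lambda^2+2\mathbf{Q}\lambda$, $\mathbf{V}(\mathbf{Q};\lambda)=(4\lambda^2+2\mathbf{Q}^2)\mathbf{U}(\mathbf{Q};\lambda)+2\mathrm{i}\sigma_3\mathbf{Q}_x\lambda$. Let $N\ge1$, $\lambda_1,\dots,\lambda_N\in\mathbb{C}$ with $\lambda_j^*\neq\pm\lambda_i$ for all $i,j$, and let $\varphi_i=(\varphi_i^{(1)},\varphi_i^{(2)})^T$ solve $\varphi_x=\mathbf{U}(\mathbf{Q};\lambda_i)\varphi$, $\varphi_t=\mathbf{V}(\mathbf{Q};\lambda_i)\varphi$. Put $\varphi^{(k)}=(\varphi_1^{(k)},\dots,\varphi_N^{(k)})^T$, $\mathbf{\Lambda}=\mathrm{diag}(\lambda_i)$, and $\mathbf{M}_{ij}=\left(\frac{\varphi_j^{\dagger}\varphi_i}{\lambda_j^{*}-\lambda_i}-\frac{\varphi_j^{\dagger}\sigma_3\varphi_i}{\lambda_j^{*}+\lambda_i}\right)\lambda_i\lambda_j^{*}$. Assume $\mathbf{M}$ is invertible and $1-2\varphi^{(2)\dagger}\mathbf{\Lambda}^\dagger(\mathbf{M}^\dagger)^{-1}\varphi^{(2)}\ne0$.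 *)

From HB Require Import structures.
From mathcomp Require Import all_boot all_order all_algebra.
From mathcomp Require Import all_classical all_reals all_analysis.
From mathcomp Require Import complex.
Set Implicit Arguments. Unset Strict Implicit. Unset Printing Implicit Defensive.
Import Order.TTheory GRing.Theory Num.Theory.
Import numFieldNormedType.Exports.
Local Open Scope ring_scope.
Local Open Scope complex_scope.

Section DNLS.
Variable R : realType.
Notation C := (R[i]).

Definition pdx (f : R -> R -> C) : R -> R -> C := fun x t =>
  (derive1 (fun y => complex.Re (f y t)) x)%:C
  + 'i%C * (derive1 (fun y => complex.Im (f y t)) x)%:C.
Definition pdt (f : R -> R -> C) : R -> R -> C := fun x t =>
  (derive1 (fun s => complex.Re (f x s)) t)%:C
  + 'i%C * (derive1 (fun s => complex.Im (f x s)) t)%:C.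

Definition pderivable (f : R -> R -> C) : Prop :=
  forall x t,
    derivable (fun y => complex.Re (f y t)) x 1 /\
    derivable (fun y => complex.Im (f y t)) x 1 /\
    derivable (fun s => complex.Re (f x s)) t 1 /\
    derivable (fun s => complex.Im (f x s)) t 1.

Definition jcontinuous (f : R -> R -> C) : Prop :=
  continuous (fun p : R * R => complex.Re (f p.1 p.2)) /\
  continuous (fun p : R * R => complex.Im (f p.1 p.2)).

Fixpoint iter_pd (w : seq bool) (f : R -> R -> C) : R -> R -> C :=
  match w with
  | [::] => f
  | b :: w' => (if b then pdx else pdt) (iter_pd w' f)
  end.

Definition smooth2 (f : R -> R -> C) : Prop :=
  forall w, pderivable (iter_pd w f) /\ jcontinuous (iter_pd w f).

Definition bounded2 (f : R -> R -> C) : Prop :=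
  exists B : R, forall x t, `|f x t| <= B%:C.

Definition is_DNLS_solution (u : R -> R -> C) : Prop :=
  forall x t, 'i%C * pdt u x t + pdx (pdx u) x t
     + 2%:R * 'i%C * pdx (fun y s => `|u y s| ^+ 2 * u y s) x t = 0.

Definition conjmx m n (A : 'M[C]_(m, n)) : 'M[C]_(n, m) := (map_mx conjc A)^T.

Definition sigma3 : 'M[C]_2 := \matrix_(i, j) (if i == j then
   (if i == 0 then 1 else -1) else 0).

Definition Qmat (u : R -> R -> C) (x t : R) : 'M[C]_2 :=
  \matrix_(i, j) (if (i == 0) && (j == 1) then 'i%C * u x t
                  else if (i == 1) && (j == 0) then 'i%C * conjc (u x t)
                  else 0).

Definition Umat (Q : 'M[C]_2) (l : C) : 'M[C]_2 :=
  (- 2%:R * 'i%C * l ^+ 2) *: sigma3 + (2%:R * l) *: Q.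

Definition Vmat (Q Qx : 'M[C]_2) (l : C) : 'M[C]_2 :=
  ((4%:R * l ^+ 2)%:M + 2%:R *: (Q *m Q)) *m Umat Q l
  + (2%:R * 'i%C * l) *: (sigma3 *m Qx).

Definition Qxmat (u : R -> R -> C) (x t : R) : 'M[C]_2 :=
  \matrix_(i, j) pdx (fun y s => Qmat u y s i j) x t.

Definition lax_solution (u : R -> R -> C) (l : C)
    (phi : R -> R -> 'cV[C]_2) : Prop :=
  pderivable (fun x t => phi x t 0 0) /\ pderivable (fun x t => phi x t 1 0) /\
  forall x t (k : 'I_2),
    pdx (fun y s => phi y s k 0) x t = (Umat (Qmat u x t) l *m phi x t) k 0 /\
    pdt (fun y s => phi y s k 0) x t
      = (Vmat (Qmat u x t) (Qxmat u x t) l *m phi x t) k 0.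

(* phi^(k) = (phi_1^(k), ..., phi_N^(k))^T *)
Definition phicomp N (phi : 'I_N -> R -> R -> 'cV[C]_2) (k : 'I_2) x t
  : 'cV[C]_N := \col_i phi i x t k 0.

Definition Lam N (lam : 'I_N -> C) : 'M[C]_N := \matrix_(i, j) (if i == j then lam i else 0).

Definition Mmat N (lam : 'I_N -> C) (phi : 'I_N -> R -> R -> 'cV[C]_2) x t
  : 'M[C]_N := \matrix_(i, j)
   (((conjmx (phi j x t) *m phi i x t) 0 0 / (conjc (lam j) - lam i)
    - (conjmx (phi j x t) *m sigma3 *m phi i x t) 0 0 / (conjc (lam j) + lam i))
    * lam i * conjc (lam j)).

Definition denom N lam phi x t : C :=
  1 - 2%:R * (conjmx (phicomp phi 1 x t) *m conjmx (Lam lam)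
               *m invmx (conjmx (@Mmat N lam phi x t)) *m phicomp phi 1 x t) 0 0.

Definition u0 N (u : R -> R -> C) lam phi : R -> R -> C := fun x t =>
  u x t + 'i%C * pdx (fun y s => (conjmx (phicomp phi 1 y s)
       *m invmx (@Mmat N lam phi y s) *m phicomp phi 0 y s) 0 0) x t.

Definition uinf N (u : R -> R -> C) lam phi : R -> R -> C := fun x t =>
  (1 + 2%:R * (conjmx (phicomp phi 0 x t) *m conjmx (Lam lam)
        *m invmx (@Mmat N lam phi x t) *m phicomp phi 0 x t) 0 0)
    / denom lam phi x t * u x t
  + 4%:R * (conjmx (phicomp phi 1 x t) *m (conjmx (Lam lam) ^+ 2)
        *m invmx (@Mmat N lam phi x t) *m phicomp phi 0 x t) 0 0
    / denom lam phi x t.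

End DNLS.

(* Both potentials are scalar expressions in the forms p^dag M^-1 q.  The
   x-part of the Lax pair gives the x-derivatives of phi^(1), phi^(2) and of M,
   hence, with (M^-1)_x = - M^-1 M_x M^-1, the derivative of
   phi^(2)^dag M^-1 phi^(1).  The Gram-type matrix M solves the Sylvester
   equation  M Lam^dag^2 - Lam^2 M = 2 (Lam^2 phi^(1) (Lam phi^(1))^dag
   + Lam phi^(2) (Lam^2 phi^(2))^dag)  and satisfies
   M Lam^dag + Lam M^dag = 2 Lam phi^(2) (Lam phi^(2))^dag.  Sandwiching these
   between phi^(2)^dag M^-1 and M^-1 phi^(1), resp. (M^dag)^-1 phi^(2), yields
   two scalar relations; the second one shows that 1/denominator equals
   1 - 2 phi^(2)^dag M^-1 Lam phi^(2), and together they make u0 and uinf agree. *)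

From Pilot Require Import Defs.
From HB Require Import structures.
From mathcomp Require Import all_boot all_order all_algebra.
From mathcomp Require Import all_classical all_reals all_analysis.
From mathcomp Require Import complex ring.
Import Order.TTheory GRing.Theory Num.Theory.
Local Open Scope ring_scope.
Local Open Scope complex_scope.

Set Implicit Arguments. Unset Strict Implicit.

(* MathComp's [conjmx] is conjugation of a matrix by a basis; ours is the
   conjugate transpose of [Defs]. *)
Local Notation conjmx := Defs.conjmx.

Section ComplexArith.
Variable R : realType.
Local Notation C := R[i].
Local Notation Re := (@complex.Re R).
Local Notation Im := (@complex.Im R).

Lemma ReD (a b : C) : Re (a + b) = Re a + Re b. Proof. by case: a; case: b. Qed.
Lemma ImD (a b : C) : Im (a + b) = Im a + Im b. Proof. by case: a; case: b. Qed.
Lemma ReN (a : C) : Re (- a) = - Re a. Proof. by case: a. Qed.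
Lemma ImN (a : C) : Im (- a) = - Im a. Proof. by case: a. Qed.
Lemma ReJ (a : C) : Re a^*%C = Re a. Proof. by case: a. Qed.
Lemma ImJ (a : C) : Im a^*%C = - Im a. Proof. by case: a. Qed.

Lemma ReM (a b : C) : Re (a * b) = Re a * Re b - Im a * Im b.
Proof. by case: a; case: b. Qed.

Lemma ImM (a b : C) : Im (a * b) = Re a * Im b + Im a * Re b.
Proof. by case: a => ? ?; case: b => ? ? /=; ring. Qed.

Lemma complex_ext (a b : C) : Re a = Re b -> Im a = Im b -> a = b.
Proof. by case: a; case: b => ? ? ? ? /= -> ->. Qed.

Lemma conjc_i : ('i%C : C)^*%C = - 'i%C.
Proof. by apply: complex_ext; rewrite /= ?oppr0. Qed.

Lemma conjcD (z w : C) : (z + w)^*%C = z^*%C + w^*%C. Proof. exact: rmorphD. Qed.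
Lemma conjcN (z : C) : (- z)^*%C = - z^*%C. Proof. exact: rmorphN. Qed.
Lemma conjcM (z w : C) : (z * w)^*%C = z^*%C * w^*%C. Proof. exact: rmorphM. Qed.
Lemma conjcX (z : C) n : (z ^+ n)^*%C = z^*%C ^+ n. Proof. exact: rmorphXn. Qed.
Lemma conjcV (z : C) : (z^-1)^*%C = (z^*%C)^-1. Proof. exact: conjc_inv. Qed.

(* The generic [rmorphD], [rmorphM], ... would state these for the bundled
   morphism, which [field] cannot relate to [conjc]. *)
Definition conjcE := (conjc_nat, conjc_i, conjcK, conjcV, conjcD, conjcN, conjcM, conjcX).

End ComplexArith.

Section ComplexDerivative.
Variable R : realType.
Local Notation C := R[i].
Local Notation Re := (@complex.Re R).
Local Notation Im := (@complex.Im R).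
Implicit Types (f g : R -> C) (x : R) (d e : C).

Definition is_cderive f x d :=
  is_derive x 1 (Re \o f) (Re d) /\ is_derive x 1 (Im \o f) (Im d).

Definition cderivable f x := derivable (Re \o f) x 1 /\ derivable (Im \o f) x 1.

Definition cderive1 f x : C :=
  (derive1 (Re \o f) x)%:C + 'i%C * (derive1 (Im \o f) x)%:C.

Lemma cderivableP f x : cderivable f x -> is_cderive f x (cderive1 f x).
Proof.
case=> dRe dIm; rewrite /cderive1 !derive1E.
by split; apply: is_derive_eq (derivableP _) _ => //=; ring.
Qed.

Lemma is_cderive_cderivable f x d : is_cderive f x d -> cderivable f x.
Proof. by case=> -[? _] [? _]. Qed.

Lemma cderive1_val f x d : is_cderive f x d -> cderive1 f x = d.
Proof.
case=> -[_ eRe] [_ eIm]; rewrite /cderive1 !derive1E eRe eIm.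
by apply: complex_ext => /=; ring.
Qed.

Lemma is_cderive_eq f x d e : is_cderive f x d -> d = e -> is_cderive f x e.
Proof. by move=> ? <-. Qed.

Lemma is_cderive_ext f g x d : f =1 g -> is_cderive f x d -> is_cderive g x d.
Proof. by move=> /funext ->. Qed.

Lemma is_cderive_cst (k : C) x : is_cderive (fun=> k) x 0.
Proof. by split; exact: is_derive_cst. Qed.

Lemma is_cderiveD f g x d e : is_cderive f x d -> is_cderive g x e ->
  is_cderive (fun y => f y + g y) x (d + e).
Proof.
case=> fRe fIm [gRe gIm]; rewrite /is_cderive ReD ImD.
have -> : Re \o (fun y => f y + g y) = (Re \o f) + (Re \o g).
  by apply/funext => y; rewrite fctE /= ReD.
have -> : Im \o (fun y => f y + g y) = (Im \o f) + (Im \o g).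
  by apply/funext => y; rewrite fctE /= ImD.
by split; exact: is_deriveD.
Qed.

Lemma is_cderiveN f x d : is_cderive f x d -> is_cderive (fun y => - f y) x (- d).
Proof.
case=> fRe fIm; rewrite /is_cderive ReN ImN.
have -> : Re \o (fun y => - f y) = - (Re \o f) by apply/funext => y; rewrite fctE /= ReN.
have -> : Im \o (fun y => - f y) = - (Im \o f) by apply/funext => y; rewrite fctE /= ImN.
by split; exact: is_deriveN.
Qed.

Lemma is_cderiveM f g x d e : is_cderive f x d -> is_cderive g x e ->
  is_cderive (fun y => f y * g y) x (d * g x + f x * e).
Proof.
case=> fRe fIm [gRe gIm]; rewrite /is_cderive.
have -> : Re \o (fun y => f y * g y) = (Re \o f) * (Re \o g) - (Im \o f) * (Im \o g).
  by apply/funext => y; rewrite !fctE /= ReM.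
have -> : Im \o (fun y => f y * g y) = (Re \o f) * (Im \o g) + (Im \o f) * (Re \o g).
  by apply/funext => y; rewrite !fctE /= ImM.
split.
  apply: is_derive_eq (is_deriveB (is_deriveM fRe gRe) (is_deriveM fIm gIm)) _.
  by rewrite /= ReD !ReM /= /GRing.scale /=; ring.
apply: is_derive_eq (is_deriveD (is_deriveM fRe gIm) (is_deriveM fIm gRe)) _.
by rewrite /= ImD !ImM /= /GRing.scale /=; ring.
Qed.

Lemma is_cderive_conj f x d : is_cderive f x d -> is_cderive (fun y => (f y)^*%C) x d^*%C.
Proof.
case=> fRe fIm; rewrite /is_cderive ReJ ImJ.
have -> : Re \o (fun y => (f y)^*%C) = Re \o f by apply/funext => y /=; rewrite ReJ.
have -> : Im \o (fun y => (f y)^*%C) = - (Im \o f).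
  by apply/funext => y; rewrite opprfctE /= ImJ.
by split; [exact: fRe | exact: is_deriveN].
Qed.

Lemma is_cderive_sum (I : Type) (r : seq I) (F : I -> R -> C) (d : I -> C) x :
  (forall i, is_cderive (F i) x (d i)) ->
  is_cderive (fun y => \sum_(i <- r) F i y) x (\sum_(i <- r) d i).
Proof.
move=> dF; elim: r => [|i r IH].
  by rewrite big_nil; under eq_fun do rewrite big_nil; exact: is_cderive_cst.
by rewrite big_cons; under eq_fun do rewrite big_cons; exact: is_cderiveD.
Qed.

Lemma cderivableE f x : cderivable f x <-> exists d, is_cderive f x d.
Proof.
split=> [/cderivableP|[d /is_cderive_cderivable]]; last by [].
by exists (cderive1 f x).
Qed.

Lemma cderivable_cst (k : C) x : cderivable (fun=> k) x.
Proof. by apply/cderivableE; exists 0; exact: is_cderive_cst. Qed.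

Lemma cderivableM f g x : cderivable f x -> cderivable g x ->
  cderivable (fun y => f y * g y) x.
Proof.
by move=> /cderivableP df /cderivableP dg; apply/cderivableE; eexists; exact: is_cderiveM df dg.
Qed.

Lemma cderivable_sum (I : Type) (r : seq I) (F : I -> R -> C) x :
  (forall i, cderivable (F i) x) -> cderivable (fun y => \sum_(i <- r) F i y) x.
Proof.
move=> dF; apply/cderivableE; eexists.
by apply: is_cderive_sum => i; exact: cderivableP.
Qed.

Lemma cderivable_prod (I : Type) (r : seq I) (F : I -> R -> C) x :
  (forall i, cderivable (F i) x) -> cderivable (fun y => \prod_(i <- r) F i y) x.
Proof.
move=> dF; elim: r => [|i r IH].
  under eq_fun do rewrite big_nil.
  exact: cderivable_cst.
under eq_fun do rewrite big_cons.
exact: cderivableM (dF i) IH.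
Qed.

Lemma cderivableV f x : f x != 0 -> cderivable f x -> cderivable (fun y => (f y)^-1) x.
Proof.
move=> fx_neq0 [dRe dIm].
pose n := (Re \o f) * (Re \o f) + (Im \o f) * (Im \o f).
have dn : derivable n x 1 := derivableD (derivableM dRe dRe) (derivableM dIm dIm).
have nx_neq0 : n x != 0.
  rewrite /n !fctE /=; apply: contra fx_neq0.
  rewrite -!expr2 paddr_eq0 ?sqr_ge0 // !sqrf_eq0 => /andP[/eqP eRe /eqP eIm].
  by apply/eqP/complex_ext.
have dn' := derivableV nx_neq0 dn.
split.
  have -> : Re \o (fun y => (f y)^-1) = (Re \o f) * (fun y => (n y)^-1).
    by apply/funext => y; rewrite /n !fctE /=; case: (f y) => a b; rewrite /= !expr2.
  exact: derivableM dRe dn'.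
have -> : Im \o (fun y => (f y)^-1) = - ((Im \o f) * (fun y => (n y)^-1)).
  apply/funext => y; rewrite /n opprfctE !fctE /=; case: (f y) => a b.
  by rewrite /= !expr2.
exact: derivableN (derivableM dIm dn').
Qed.

End ComplexDerivative.

Section MatrixDerivative.
Variable R : realType.
Local Notation C := R[i].

Definition is_mxderive m n (F : R -> 'M[C]_(m, n)) x (D : 'M[C]_(m, n)) :=
  forall i j, is_cderive (fun y => F y i j) x (D i j).

Definition mxderivable m n (F : R -> 'M[C]_(m, n)) x :=
  forall i j, cderivable (fun y => F y i j) x.

Section Rules.
Variables (m n p : nat) (x : R).

Lemma is_mxderive_ext (F G : R -> 'M[C]_(m, n)) D :
  F =1 G -> is_mxderive F x D -> is_mxderive G x D.
Proof. by move=> /funext ->. Qed.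

Lemma is_mxderive_unique (F : R -> 'M[C]_(m, n)) D E :
  is_mxderive F x D -> is_mxderive F x E -> D = E.
Proof.
move=> dD dE; apply/matrixP => i j.
by rewrite -(cderive1_val (dD i j)) -(cderive1_val (dE i j)).
Qed.

Lemma is_mxderive_cst (A : 'M[C]_(m, n)) : is_mxderive (fun=> A) x 0.
Proof. by move=> i j; rewrite mxE; exact: is_cderive_cst. Qed.

Lemma is_mxderiveM (F : R -> 'M[C]_(m, n)) (G : R -> 'M[C]_(n, p)) D E :
  is_mxderive F x D -> is_mxderive G x E ->
  is_mxderive (fun y => F y *m G y) x (D *m G x + F x *m E).
Proof.
move=> dF dG i j; rewrite !mxE -big_split /=.
apply: is_cderive_ext (is_cderive_sum _ _) => [y|k]; first by rewrite mxE.
exact: is_cderiveM.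
Qed.

Lemma is_mxderive_conj (F : R -> 'M[C]_(m, n)) D :
  is_mxderive F x D -> is_mxderive (fun y => conjmx (F y)) x (conjmx D).
Proof.
move=> dF i j; rewrite !mxE.
by apply: is_cderive_ext (is_cderive_conj (dF j i)) => y; rewrite !mxE.
Qed.

Lemma mxderivableP (F : R -> 'M[C]_(m, n)) :
  mxderivable F x -> exists D, is_mxderive F x D.
Proof.
move=> dF; exists (\matrix_(i, j) cderive1 (fun y => F y i j) x) => i j.
by rewrite mxE; exact: cderivableP.
Qed.

End Rules.

Lemma cderivable_det n (F : R -> 'M[C]_n) x :
  mxderivable F x -> cderivable (fun y => \det (F y)) x.
Proof.
move=> dF; apply: cderivable_sum => s.
apply: cderivableM; first exact: cderivable_cst.
by apply: cderivable_prod => i; exact: dF.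
Qed.

Lemma mxderivable_inv n (F : R -> 'M[C]_n) x :
  (forall y, F y \in unitmx) -> mxderivable F x -> mxderivable (fun y => invmx (F y)) x.
Proof.
move=> Funit dF i j.
have -> : (fun y => invmx (F y) i j) = (fun y => (\det (F y))^-1 * cofactor (F y) j i).
  by apply/funext => y; rewrite /invmx Funit !mxE.
apply: cderivableM.
  apply: cderivableV; last exact: cderivable_det.
  by have := Funit x; rewrite unitmxE unitfE.
apply: cderivableM; first exact: cderivable_cst.
apply: cderivable_det => k l.
have -> : (fun y => row' j (col' i (F y)) k l) = (fun y => F y (lift j k) (lift i l)).
  by apply/funext => y; rewrite !mxE.
exact: dF.
Qed.

(* Existence comes from the cofactor formula, the value from differentiating
   F * F^-1 = 1. *)
Lemma is_mxderive_inv n (F : R -> 'M[C]_n) x D :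
  (forall y, F y \in unitmx) -> is_mxderive F x D ->
  is_mxderive (fun y => invmx (F y)) x (- (invmx (F x) *m D *m invmx (F x))).
Proof.
move=> Funit dF.
have [E dE] : exists E, is_mxderive (fun y => invmx (F y)) x E.
  apply/mxderivableP/mxderivable_inv => // i j.
  exact: is_cderive_cderivable (dF i j).
suff -> : - (invmx (F x) *m D *m invmx (F x)) = E by [].
have dFE : D *m invmx (F x) + F x *m E = 0.
  apply: is_mxderive_unique (is_mxderiveM dF dE) _.
  by apply: is_mxderive_ext (is_mxderive_cst _ 1%:M) => y; rewrite mulmxV.
have := congr1 (mulmx (invmx (F x))) dFE.
rewrite mulmx0 mulmxDr !mulmxA mulVmx // mul1mx => /eqP.
by rewrite addr_eq0 => /eqP ->; rewrite opprK.
Qed.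

End MatrixDerivative.

Section Sesquilinear.
Variables (R : realType) (N : nat).
Local Notation C := R[i].
Implicit Types (A B : 'M[C]_N) (p q r s : 'cV[C]_N).

Lemma conjmxM m n k (A : 'M[C]_(m, n)) (B : 'M[C]_(n, k)) :
  conjmx (A *m B) = conjmx B *m conjmx A.
Proof. by rewrite /Defs.conjmx map_mxM trmx_mul. Qed.

Lemma conjmxD m n (A B : 'M[C]_(m, n)) : conjmx (A + B) = conjmx A + conjmx B.
Proof. by rewrite /Defs.conjmx map_mxD linearD. Qed.

Lemma conjmxZ m n c (A : 'M[C]_(m, n)) : conjmx (c *: A) = c^*%C *: conjmx A.
Proof. by rewrite /Defs.conjmx map_mxZ linearZ. Qed.

Lemma conjmx_inv A : conjmx (invmx A) = invmx (conjmx A).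
Proof. by rewrite /Defs.conjmx map_invmx trmx_inv. Qed.

Lemma conjmx1 : conjmx (1%:M : 'M[C]_N) = 1%:M.
Proof. by apply/matrixP => i j; rewrite !mxE conjc_nat eq_sym. Qed.

Definition sesq A p q : C := (conjmx p *m A *m q) 0 0.

Lemma sesqD A B p q : sesq (A + B) p q = sesq A p q + sesq B p q.
Proof. by rewrite /sesq mulmxDr mulmxDl mxE. Qed.

Lemma sesqN A p q : sesq (- A) p q = - sesq A p q.
Proof. by rewrite /sesq mulmxN mulNmx mxE. Qed.

Lemma sesqZ c A p q : sesq (c *: A) p q = c * sesq A p q.
Proof. by rewrite /sesq -scalemxAr -scalemxAl mxE. Qed.

Lemma sesqDl A p q r : sesq A (p + q) r = sesq A p r + sesq A q r.
Proof. by rewrite /sesq conjmxD !mulmxDl mxE. Qed.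

Lemma sesqZl c A p q : sesq A (c *: p) q = c^*%C * sesq A p q.
Proof. by rewrite /sesq conjmxZ -!scalemxAl mxE. Qed.

Lemma sesqDr A p q r : sesq A p (q + r) = sesq A p q + sesq A p r.
Proof. by rewrite /sesq mulmxDr mxE. Qed.

Lemma sesqZr c A p q : sesq A p (c *: q) = c * sesq A p q.
Proof. by rewrite /sesq -scalemxAr mxE. Qed.

Lemma sesq_mull A B p q : sesq (conjmx A *m B) p q = sesq B (A *m p) q.
Proof. by rewrite /sesq conjmxM !mulmxA. Qed.

Lemma sesq_mulr A B p q : sesq (A *m B) p q = sesq A p (B *m q).
Proof. by rewrite /sesq !mulmxA. Qed.

Lemma sesq_mulmxD A B D E p q :
  sesq (A *m (D + E) *m B) p q = sesq (A *m D *m B) p q + sesq (A *m E *m B) p q.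
Proof. by rewrite mulmxDr mulmxDl sesqD. Qed.

Lemma sesq_outerZ A B c p q r s :
  sesq (A *m (c *: (p *m conjmx q)) *m B) r s = c * (sesq A r p * sesq B q s).
Proof.
rewrite -scalemxAr -scalemxAl sesqZ /sesq.
have -> : conjmx r *m (A *m (p *m conjmx q) *m B) *m s
          = (conjmx r *m A *m p) *m (conjmx q *m B *m s) by rewrite !mulmxA.
by rewrite mxE big_ord1.
Qed.

Lemma is_cderive_sesq (A : R -> 'M[C]_N) (p q : R -> 'cV[C]_N) x A' p' q' :
  is_mxderive A x A' -> is_mxderive p x p' -> is_mxderive q x q' ->
  is_cderive (fun y => sesq (A y) (p y) (q y)) x
    (sesq (A x) p' (q x) + sesq A' (p x) (q x) + sesq (A x) (p x) q').
Proof.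
move=> dA dp dq.
have := is_mxderiveM (is_mxderiveM (is_mxderive_conj dp) dA) dq 0 0.
have addE (B D : 'M[C]_1) : (B + D) 0 0 = B 0 0 + D 0 0 by rewrite mxE.
by rewrite !mulmxDl !addE.
Qed.

End Sesquilinear.

Section LaxPair.
Variable R : realType.
Local Notation C := R[i].

Lemma sum_ord2 (F : 'I_2 -> C) : \sum_k F k = F 0 + F 1.
Proof. by rewrite big_ord_recr big_ord1; congr (F _ + F _); apply: val_inj. Qed.

Lemma Umat_Qmat_mulmx0 (u : R -> R -> C) x t l (v : 'cV[C]_2) :
  (Umat (Qmat u x t) l *m v) 0 0
    = - 2%:R * 'i%C * l ^+ 2 * v 0 0 + 2%:R * l * ('i%C * u x t) * v 1 0.
Proof. by rewrite mxE sum_ord2 !mxE /=; ring. Qed.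

Lemma Umat_Qmat_mulmx1 (u : R -> R -> C) x t l (v : 'cV[C]_2) :
  (Umat (Qmat u x t) l *m v) 1 0
    = 2%:R * 'i%C * l ^+ 2 * v 1 0 + 2%:R * l * ('i%C * (u x t)^*%C) * v 0 0.
Proof. by rewrite mxE sum_ord2 !mxE /=; ring. Qed.

Lemma lax_solution_is_cderive u l (ph : R -> R -> 'cV[C]_2) x t k :
  lax_solution u l ph ->
  is_cderive (fun y => ph y t k 0) x ((Umat (Qmat u x t) l *m ph x t) k 0).
Proof.
case=> d0 [d1 lax]; rewrite -(lax x t k).1; apply: cderivableP.
have [->|->] : k = 0 \/ k = 1.
  by case: k => -[|[|//]] ? ; [left | right]; apply: val_inj.
- by case: (d0 x t) => dRe [dIm _]; split; [exact: dRe | exact: dIm].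
- by case: (d1 x t) => dRe [dIm _]; split; [exact: dRe | exact: dIm].
Qed.

End LaxPair.

Section DiagonalEntries.
Variables (R : realType) (N : nat) (lam : 'I_N -> R[i]).

Lemma conjmx_Lam : conjmx (Lam lam) = Lam (fun i => (lam i)^*%C).
Proof.
apply/matrixP => i j; rewrite !mxE.
by have [->|_] := eqVneq i j; rewrite ?eqxx ?conjc0.
Qed.

Lemma mulLam m (A : 'M[R[i]]_(N, m)) : Lam lam *m A = \matrix_(i, j) (lam i * A i j).
Proof.
apply/matrixP => i j; rewrite !mxE (bigD1 i) //= big1 ?addr0; first by rewrite mxE eqxx.
by move=> k /negPf nk; rewrite mxE eq_sym nk mul0r.
Qed.

Lemma mulmxLam m (A : 'M[R[i]]_(m, N)) : A *m Lam lam = \matrix_(i, j) (A i j * lam j).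
Proof.
apply/matrixP => i j; rewrite !mxE (bigD1 j) //= big1 ?addr0; first by rewrite mxE eqxx.
by move=> k /negPf nk; rewrite mxE nk mulr0.
Qed.

End DiagonalEntries.

Lemma mul_col_row (R : realType) m n (v : 'M[R[i]]_(m, 1)) (w : 'M[R[i]]_(1, n)) :
  v *m w = \matrix_(i, j) (v i 0 * w 0 j).
Proof. by apply/matrixP => i j; rewrite !mxE big_ord1. Qed.

Lemma darboux_scalar_identity (F : fieldType) (u ga de al be bc : F) :
  ga - de = 2%:R * (de * al + be * ga) -> bc + be = 2%:R * (be * bc) ->
  u + 2%:R * (ga + u * al + 2%:R * (de * al - be * ga - u * (be * al)) + de - u * be)
  = (1 + 2%:R * al) / (1 - 2%:R * bc) * u + 4%:R * ga / (1 - 2%:R * bc).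
Proof.
move=> eq_ga eq_bc.
have den_mul : (1 - 2%:R * be) * (1 - 2%:R * bc) = 1.
  transitivity (1 - 2%:R * (bc + be) + 4%:R * (be * bc)); first by ring.
  by rewrite eq_bc; ring.
have den_neq0 : 1 - 2%:R * bc != 0.
  by apply: contra_eq_neq den_mul => ->; rewrite mulr0 eq_sym oner_neq0.
have -> : (1 - 2%:R * bc)^-1 = 1 - 2%:R * be.
  by apply: (mulIf den_neq0); rewrite mulVf.
apply/eqP; rewrite -subr_eq0.
set lhs := (X in X == 0).
have -> : lhs = - 2%:R * ((ga - de) - 2%:R * (de * al + be * ga)) by rewrite /lhs; ring.
by rewrite eq_ga subrr mulr0.
Qed.

Section DarbouxAlgebra.
Variables (R : realType) (N : nat).
Local Notation C := R[i].
Variables (L M X : 'M[C]_N) (a b : 'cV[C]_N).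
Hypotheses (mulXM : X *m M = 1%:M) (mulMX : M *m X = 1%:M).

Lemma sesq_Lam_commutator :
  M *m conjmx L *m conjmx L - L *m (L *m M)
    = 2%:R *: (L *m (L *m a) *m conjmx (L *m a)) + 2%:R *: (L *m b *m conjmx (L *m (L *m b))) ->
  sesq X (L *m (L *m b)) a - sesq X b (L *m (L *m a))
    = 2%:R * (sesq X b (L *m (L *m a)) * sesq X (L *m a) a
              + sesq X b (L *m b) * sesq X (L *m (L *m b)) a).
Proof.
have -> : sesq X (L *m (L *m b)) a - sesq X b (L *m (L *m a))
    = sesq (X *m (M *m conjmx L *m conjmx L - L *m (L *m M)) *m X) b a.
  rewrite mulmxBr mulmxBl sesqD sesqN !mulmxA mulXM mul1mx -!mulmxA mulMX mulmx1.
  by rewrite !sesq_mull sesq_mulr -mulmxA.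
(* The occurrence switch [{1}] spares [rewrite] slow conversion checks between
   distinct matrix products. *)
by move=> ->; rewrite {1}sesq_mulmxD !{1}sesq_outerZ; ring.
Qed.

Lemma sesq_Lam_adjoint :
  M *m conjmx L + L *m conjmx M = 2%:R *: (L *m b *m conjmx (L *m b)) ->
  sesq (conjmx X) (L *m b) b + sesq X b (L *m b)
    = 2%:R * (sesq X b (L *m b) * sesq (conjmx X) (L *m b) b).
Proof.
have mulMX' : conjmx M *m conjmx X = 1%:M by rewrite -conjmxM mulXM conjmx1.
move=> /(congr1 (fun Z => sesq (X *m Z *m conjmx X) b b)).
rewrite {1}sesq_outerZ mulmxDr mulmxDl sesqD.
rewrite !mulmxA mulXM mul1mx -!mulmxA mulMX' mulmx1.
by rewrite sesq_mull sesq_mulr.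
Qed.

Lemma sesq_Lax_derivative (w : C) :
  sesq X ((2%:R * 'i%C) *: (L *m (L *m b)) + (2%:R * 'i%C * w^*%C) *: (L *m a)) a
  + sesq (- (X *m ((4%:R * 'i%C) *: (L *m (L *m a) *m conjmx (L *m a))
        + (- 4%:R * 'i%C) *: (L *m b *m conjmx (L *m (L *m b)))
        + (- 4%:R * 'i%C * w) *: (L *m b *m conjmx (L *m a))) *m X)) b a
  + sesq X b (- (2%:R * 'i%C) *: (L *m (L *m a)) + (2%:R * 'i%C * w) *: (L *m b))
  = - (2%:R * 'i%C) *
    (sesq X (L *m (L *m b)) a + w * sesq X (L *m a) a
     + 2%:R * (sesq X b (L *m (L *m a)) * sesq X (L *m a) a
               - sesq X b (L *m b) * sesq X (L *m (L *m b)) a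
               - w * (sesq X b (L *m b) * sesq X (L *m a) a))
     + sesq X b (L *m (L *m a)) - w * sesq X b (L *m b)).
Proof.
rewrite sesqN !{1}sesq_mulmxD !{1}sesq_outerZ.
by rewrite sesqDl sesqDr !sesqZl !sesqZr !conjcE; ring.
Qed.

End DarbouxAlgebra.

Lemma Mmat_entry (R : realType) N (lam : 'I_N -> R[i]) phi x t i j :
  Mmat lam phi x t i j =
  (((phi j x t 0 0)^*%C * phi i x t 0 0 + (phi j x t 1 0)^*%C * phi i x t 1 0)
     * ((lam j)^*%C - lam i)^-1
   - ((phi j x t 0 0)^*%C * phi i x t 0 0 - (phi j x t 1 0)^*%C * phi i x t 1 0)
     * ((lam j)^*%C + lam i)^-1) * (lam i * (lam j)^*%C).
Proof. by rewrite !mxE !sum_ord2 !mxE !sum_ord2 !mxE /=; ring. Qed.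

Section Soliton.
Variables (R : realType) (N : nat) (u : R -> R -> R[i]) (lam : 'I_N -> R[i]).
Variables (phi : 'I_N -> R -> R -> 'cV[R[i]]_2) (t : R).
Hypothesis lam_sep : forall i j, (lam j)^*%C != lam i /\ (lam j)^*%C != - lam i.
Hypothesis phi_lax : forall i, lax_solution u (lam i) (phi i).

Lemma lam_conj_subr_neq0 i j : (lam j)^*%C - lam i != 0.
Proof. by rewrite subr_eq0; case: (lam_sep i j). Qed.

Lemma lam_conj_addr_neq0 i j : (lam j)^*%C + lam i != 0.
Proof. by rewrite addr_eq0; case: (lam_sep i j). Qed.

Local Notation L := (Lam lam).
Local Notation a y := (phicomp phi 0 y t).
Local Notation b y := (phicomp phi 1 y t).

Lemma is_mxderive_phicomp0 x : is_mxderive (fun y => a y) x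
  (- (2%:R * 'i%C) *: (L *m (L *m a x)) + (2%:R * 'i%C * u x t) *: (L *m b x)).
Proof.
move=> i j; rewrite (ord1 j).
apply: is_cderive_ext (is_cderive_eq (lax_solution_is_cderive x t 0 (phi_lax i)) _).
  by move=> y; rewrite mxE.
by rewrite Umat_Qmat_mulmx0 !mulLam !mxE; ring.
Qed.

Lemma is_mxderive_phicomp1 x : is_mxderive (fun y => b y) x
  ((2%:R * 'i%C) *: (L *m (L *m b x)) + (2%:R * 'i%C * (u x t)^*%C) *: (L *m a x)).
Proof.
move=> i j; rewrite (ord1 j).
apply: is_cderive_ext (is_cderive_eq (lax_solution_is_cderive x t 1 (phi_lax i)) _).
  by move=> y; rewrite mxE.
by rewrite Umat_Qmat_mulmx1 !mulLam !mxE; ring.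
Qed.

Lemma is_mxderive_Mmat x : is_mxderive (fun y => Mmat lam phi y t) x
  ((4%:R * 'i%C) *: (L *m (L *m a x) *m conjmx (L *m a x))
   + (- 4%:R * 'i%C) *: (L *m b x *m conjmx (L *m (L *m b x)))
   + (- 4%:R * 'i%C * u x t) *: (L *m b x *m conjmx (L *m a x))).
Proof.
move=> i j.
have d0 k := lax_solution_is_cderive x t 0 (phi_lax k).
have d1 k := lax_solution_is_cderive x t 1 (phi_lax k).
have dsum := is_cderiveD (is_cderiveM (is_cderive_conj (d0 j)) (d0 i))
                         (is_cderiveM (is_cderive_conj (d1 j)) (d1 i)).
have ddif := is_cderiveD (is_cderiveM (is_cderive_conj (d0 j)) (d0 i))
               (is_cderiveN (is_cderiveM (is_cderive_conj (d1 j)) (d1 i))).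
have dM := is_cderiveM (is_cderiveD
             (is_cderiveM dsum (is_cderive_cst (((lam j)^*%C - lam i)^-1) x))
             (is_cderiveN (is_cderiveM ddif (is_cderive_cst (((lam j)^*%C + lam i)^-1) x))))
           (is_cderive_cst (lam i * (lam j)^*%C) x).
apply: is_cderive_ext (is_cderive_eq dM _) => [y|]; first by rewrite Mmat_entry.
rewrite !Umat_Qmat_mulmx0 !Umat_Qmat_mulmx1 !conjmxM conjmx_Lam !mulmxLam.
rewrite !mul_col_row !mulLam !mxE !conjcE.
by field; rewrite lam_conj_subr_neq0 lam_conj_addr_neq0.
Qed.

Lemma Mmat_Lam_commutator x :
  Mmat lam phi x t *m conjmx L *m conjmx L - L *m (L *m Mmat lam phi x t)
    = 2%:R *: (L *m (L *m a x) *m conjmx (L *m a x))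
      + 2%:R *: (L *m b x *m conjmx (L *m (L *m b x))).
Proof.
have ME := Mmat_entry lam phi x t; move: (Mmat lam phi x t) ME => Mx ME.
apply/matrixP => i j.
rewrite !conjmxM conjmx_Lam !mulmxLam !mul_col_row !mulLam !mxE !ME.
by field; rewrite lam_conj_subr_neq0 lam_conj_addr_neq0.
Qed.

Lemma Mmat_Lam_adjoint x :
  Mmat lam phi x t *m conjmx L + L *m conjmx (Mmat lam phi x t)
    = 2%:R *: (L *m b x *m conjmx (L *m b x)).
Proof.
have ME := Mmat_entry lam phi x t; move: (Mmat lam phi x t) ME => Mx ME.
apply/matrixP => i j.
rewrite !conjmxM conjmx_Lam !mulmxLam !mul_col_row !mulLam !mxE !ME !conjcE.
have neq_m : lam i - (lam j)^*%C != 0 by rewrite -opprB oppr_eq0 lam_conj_subr_neq0.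
have neq_p : lam i + (lam j)^*%C != 0 by rewrite addrC lam_conj_addr_neq0.
by field; rewrite neq_m neq_p lam_conj_subr_neq0.
Qed.

Lemma uinf_sesqE x :
  uinf u lam phi x t =
    (1 + 2%:R * sesq (invmx (Mmat lam phi x t)) (L *m a x) (a x))
      / (1 - 2%:R * sesq (invmx (conjmx (Mmat lam phi x t))) (L *m b x) (b x)) * u x t
    + 4%:R * sesq (invmx (Mmat lam phi x t)) (L *m (L *m b x)) (a x)
      / (1 - 2%:R * sesq (invmx (conjmx (Mmat lam phi x t))) (L *m b x) (b x)).
Proof. by rewrite /uinf /denom /sesq !conjmxM expr2 -mulmxE !mulmxA. Qed.

End Soliton.

Lemma pdxE (R : realType) (f : R -> R -> R[i]) x t : pdx f x t = cderive1 (f^~ t) x.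
Proof. by []. Qed.

Unset Implicit Arguments.

Theorem mainTheorem2 (R : realType) (N : nat) (u : R -> R -> R[i])
  (lam : 'I_N -> R[i]) (phi : 'I_N -> R -> R -> 'cV[R[i]]_2) :
  (0 < N)%N ->
  bounded2 u -> smooth2 u -> is_DNLS_solution u ->
  (forall i j, conjc (lam j) != lam i /\ conjc (lam j) != - lam i) ->
  (forall i, lax_solution u (lam i) (phi i)) ->
  (forall x t, Mmat lam phi x t \in unitmx) ->
  (forall x t, denom lam phi x t != 0) ->
  forall x t, u0 u lam phi x t = uinf u lam phi x t.
Proof.
move=> _ _ _ _ lam_sep phi_lax M_unit _ x t.
have dX := is_mxderive_inv (M_unit^~ t) (is_mxderive_Mmat t lam_sep phi_lax x).
have du := is_cderive_sesq dX (is_mxderive_phicomp1 t phi_lax x) (is_mxderive_phicomp0 t phi_lax x).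
have mulXM := mulVmx (M_unit x t); have mulMX := mulmxV (M_unit x t).
have mul_i_Ni2 (z : R[i]) : 'i%C * (- (2%:R * 'i%C) * z) = 2%:R * z.
  by rewrite mulrA mulrN mulrCA -expr2 sqr_i mulrN1 opprK.
rewrite /u0 pdxE (cderive1_val du) sesq_Lax_derivative mul_i_Ni2 uinf_sesqE -conjmx_inv.
apply: darboux_scalar_identity.
  exact: sesq_Lam_commutator mulXM mulMX (Mmat_Lam_commutator phi t lam_sep x).
exact: sesq_Lam_adjoint mulXM (Mmat_Lam_adjoint phi t lam_sep x).
Qed.
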